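(* Let $A\in M_n(R)$ be non-singular, with left definite form $\bar A$ and right definite form $\tilde A$, i.e. $A=P\bar A=\tilde A Q$ for invertible matrices $P,Q$ and definite matrices $\bar A,\tilde A$. Then (a) $\bar A^{\nabla\nabla}\cong_\nu \bar A^{\nabla}\cong_\nu A^\nabla A$ and $\tilde A^{\nabla\nabla}\cong_\nu \tilde A^{\nabla}\cong_\nu AA^\nabla$; (b) $A^{\nabla\nabla}\cong_\nu PA^\nabla P$.
   Context: Supertropical semiring $R=T\cup G\cup\{-\infty\}$: $T=\mathcal G$ an ordered abelian group (tangible), $G=\{a^\nu\}$ a copy (ghost); $a+b$ is the element of larger $\nu$-value if the $\nu$-values differ and $a^\nu$ if equal; multiplication adds $\nu$-values, is ghost if a factor is ghost, $-\infty$ absorbing; $0_R=-\infty$, $1_R=0$. For matrices, $A\cong_\nu B$ means $a_{i,j}^\nu=b_{i,j}^\nu$ for all $i,j$. $\det(A)=\sum_{\sigma\in S_n}\prod_i a_{i,\sigma(i)}$; $A$ non-singular means $\det(A)\in T$. $\operatorname{adj}(A)_{i,j}=\det(A_{j,i})$ (minor deleting row $j$, column $i$), and for non-singular $A$, $A^\nabla=\det(A)^{-1}\operatorname{adj}(A)$; $A^{\nabla\nabla}=(A^\nabla)^\nabla$. A matrix is invertible iff it is a generalized permutation matrix (permutation matrix times diagonal matrix with tangible diagonal). A matrix is definite if its diagonal entries are $1_R$ and its determinant is $1_R$. Every non-singular $A$ can be written $A=P\bar A$ ($P$ invertible, $\bar A$ definite; left definite form) and $A=\tilde A Q$ ($Q$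 invertible, $\tilde A$ definite; right definite form), obtained by moving the unique dominant permutation track to the diagonal and normalizing it to $1_R$. *)

From HB Require Import structures.
From mathcomp Require Import all_boot all_order all_algebra all_fingroup.
Set Implicit Arguments. Unset Strict Implicit. Unset Printing Implicit Defensive.
Import Order.TTheory GRing.Theory.
Local Open Scope ring_scope.

Record is_oag (G : zmodType) (le : rel G) : Prop := {
  oag_refl : reflexive le;
  oag_antisym : antisymmetric le;
  oag_trans : transitive le;
  oag_total : total le;
  oag_add : forall x y z, le x y -> le (x + z) (y + z)
}.

Section Supertropical.
Context (G : zmodType) (le : rel G).

Definition oag_lt (a b : G) : bool := le a b && ~~ le b a.

Inductive stelt : Type :=
| Tang of G
| Ghost of G
| NegInf.

Definition stadd (x y : stelt) : stelt :=
  match x, y with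
  | NegInf, _ => y
  | _, NegInf => x
  | (Tang a | Ghost a), (Tang b | Ghost b) =>
      if oag_lt a b then y else if oag_lt b a then x else Ghost a
  end.

Definition stmul (x y : stelt) : stelt :=
  match x, y with
  | NegInf, _ | _, NegInf => NegInf
  | Tang a, Tang b => Tang (a + b)
  | Tang a, Ghost b | Ghost a, Tang b | Ghost a, Ghost b => Ghost (a + b)
  end.

Definition st0 : stelt := NegInf.
Definition st1 : stelt := Tang 0.

Definition nu (x : stelt) : stelt :=
  match x with Tang a | Ghost a => Ghost a | NegInf => NegInf end.

Definition tangible (x : stelt) : bool :=
  if x is Tang _ then true else false.

(* inverse of a tangible element (junk elsewhere; only used on tangibles) *)
Definition stinv (x : stelt) : stelt :=
  match x with Tang a => Tang (- a) | Ghost a => Ghost (- a) | NegInf => NegInf end.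

Definition stmx_mul {m n p : nat} (A : 'M[stelt]_(m, n)) (B : 'M[stelt]_(n, p))
  : 'M[stelt]_(m, p) :=
  \matrix_(i, j) \big[stadd/st0]_(k < n) stmul (A i k) (B k j).

Definition stmx_scale {m n : nat} (c : stelt) (A : 'M[stelt]_(m, n)) : 'M[stelt]_(m, n) :=
  \matrix_(i, j) stmul c (A i j).

Definition stmx1 (n : nat) : 'M[stelt]_n :=
  \matrix_(i, j) if i == j then st1 else st0.

Definition stdet {n : nat} (A : 'M[stelt]_n) : stelt :=
  \big[stadd/st0]_(s : 'S_n) \big[stmul/st1]_(i < n) A i (s i).

Definition nonsingular {n : nat} (A : 'M[stelt]_n) : bool := tangible (stdet A).

Definition skip_ord {n : nat} (j : 'I_n) (k : 'I_n.-1) : 'I_n := insubd j (bump j k).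
Definition stminor {n : nat} (A : 'M[stelt]_n) (j i : 'I_n) : 'M[stelt]_n.-1 :=
  \matrix_(k, l) A (skip_ord j k) (skip_ord i l).

Definition stadj {n : nat} (A : 'M[stelt]_n) : 'M[stelt]_n :=
  \matrix_(i, j) stdet (stminor A j i).

Definition stnabla {n : nat} (A : 'M[stelt]_n) : 'M[stelt]_n :=
  stmx_scale (stinv (stdet A)) (stadj A).

Definition nu_equiv {m n : nat} (A B : 'M[stelt]_(m, n)) : Prop :=
  forall i j, nu (A i j) = nu (B i j).

Definition invertible {n : nat} (A : 'M[stelt]_n) : Prop :=
  exists B : 'M[stelt]_n, stmx_mul A B = stmx1 n /\ stmx_mul B A = stmx1 n.

Definition definite {n : nat} (A : 'M[stelt]_n) : Prop :=
  (forall i, A i i = st1) /\ stdet A = st1.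

End Supertropical.

(* Everything is proved "up to ghosts", i.e. on ν-values.  The basic tool is
   the total preorder [vle] comparing ν-values: a supertropical sum has the
   ν-value of its largest summand, so an entry of a determinant or of an
   adjoint is characterised by upper and lower bounds over the weights of
   (partial) permutation tracks. *)

From HB Require Import structures.
From mathcomp Require Import all_boot all_order all_algebra all_fingroup.
From mathcomp Require Import zify.

Set Implicit Arguments. Unset Strict Implicit. Unset Printing Implicit Defensive.

Lemma stmulA (G : zmodType) : associative (@stmul G).
Proof. by move=> [a|a|] [b|b|] [c|c|] //=; rewrite GRing.addrA. Qed.
Lemma stmulC (G : zmodType) : commutative (@stmul G).
Proof. by move=> [a|a|] [b|b|] //=; rewrite GRing.addrC. Qed.
Lemma stmul1m (G : zmodType) : left_id (@st1 G) (@stmul G).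
Proof. by move=> [a|a|] //=; rewrite GRing.add0r. Qed.
HB.instance Definition _ (G : zmodType) :=
  Monoid.isComLaw.Build (stelt G) (@st1 G) (@stmul G) (@stmulA G) (@stmulC G) (@stmul1m G).

Section Supertropical.
Context (G : zmodType) (le : rel G) (HG : is_oag le).
Local Notation R := (stelt G).
Local Notation add := (stadd le).
Local Notation mul := (@stmul G).
Local Notation one := (@st1 G).
Local Notation zero := (@st0 G).
Local Open Scope ring_scope.

Lemma stmulx1 (x : R) : mul x one = x. Proof. by rewrite stmulC stmul1m. Qed.
Lemma stmulx0 (x : R) : mul x zero = zero. Proof. by case: x. Qed.
Lemma stmulTT (a b : G) : mul (Tang a) (Tang b) = Tang (a + b). Proof. by []. Qed.
Lemma stmulACA : interchange mul mul.
Proof. by move=> [a|a|] [b|b|] [e|e|] [f|f|] //=; rewrite GRing.addrACA. Qed.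

Lemma prod_tang (I : Type) (r : seq I) (P : pred I) (f : I -> G) :
  \big[mul/one]_(i <- r | P i) Tang (f i) = Tang (\sum_(i <- r | P i) f i).
Proof. by symmetry; apply: (big_morph (@Tang G)). Qed.

Lemma nu_mul x y : nu (mul x y) = mul (nu x) (nu y).
Proof. by case: x; case: y. Qed.
Lemma nu_stinv (x : R) : nu (stinv x) = stinv (nu x). Proof. by case: x. Qed.
Lemma stinv_mul (x y : R) : stinv (mul x y) = mul (stinv x) (stinv y).
Proof. by case: x => [a|a|]; case: y => [b|b|] //=; rewrite GRing.opprD. Qed.
Lemma stinv1 : stinv one = one. Proof. by rewrite /= GRing.oppr0. Qed.

Lemma nu_prod_congr (I : Type) (r : seq I) (P : pred I) (F F' : I -> R) :
  (forall i, P i -> nu (F i) = nu (F' i)) ->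
  nu (\big[mul/one]_(i <- r | P i) F i) = nu (\big[mul/one]_(i <- r | P i) F' i).
Proof.
move=> H; apply: (big_ind2 (fun x y => nu x = nu y)) => //.
by move=> x1 x2 y1 y2 e1 e2; rewrite !nu_mul e1 e2.
Qed.

Lemma stnablaE n (M : 'M[R]_n) i j :
  stnabla le M i j = mul (stinv (stdet le M)) (stadj le M i j).
Proof. by rewrite mxE. Qed.

Let leR : reflexive le := oag_refl HG.
Let leT : transitive le := oag_trans HG.
Let leA : antisymmetric le := oag_antisym HG.
Let leTot : total le := oag_total HG.

Lemma le_add2 a b c d : le a b -> le c d -> le (a + c) (b + d).
Proof.
move=> h1 h2; apply: (leT (oag_add HG c h1)).
by rewrite ![b + _]GRing.addrC; apply: oag_add.
Qed.

Definition vle (x y : R) : bool :=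
  match x, y with
  | NegInf, _ => true
  | _, NegInf => false
  | (Tang a | Ghost a), (Tang b | Ghost b) => le a b
  end.

Lemma vle_refl x : vle x x.
Proof. by case: x => //= a; apply: leR. Qed.
Lemma vle_trans y x z : vle x y -> vle y z -> vle x z.
Proof. by case: x => [a|a|]; case: y => [b|b|]; case: z => [c|c|] //=; apply: leT. Qed.
Lemma vle_nu x y : vle x y -> vle y x -> nu x = nu y.
Proof.
by case: x => [a|a|]; case: y => [b|b|] //= h1 h2; rewrite (leA (introT andP (conj h1 h2))).
Qed.
Lemma vle_nu_l x y : vle (nu x) y = vle x y.
Proof. by case: x. Qed.
Lemma vle_nu_r x y : vle x (nu y) = vle x y.
Proof. by case: x; case: y. Qed.
Lemma vle_nu_eq x x' y : nu x = nu x' -> vle x y = vle x' y.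
Proof. by move=> h; rewrite -vle_nu_l h vle_nu_l. Qed.
Lemma vle_nu_eqr x y y' : nu y = nu y' -> vle x y = vle x y'.
Proof. by move=> h; rewrite -vle_nu_r h vle_nu_r. Qed.

Lemma add_spec x y :
  [&& vle x (add x y), vle y (add x y) & vle (add x y) x || vle (add x y) y].
Proof.
case: x => [a|a|]; case: y => [b|b|] //=; rewrite ?leR ?orbT //;
rewrite /oag_lt; case ab: (le a b); case ba: (le b a) => //=;
  rewrite ?leR ?ab ?ba ?orbT //; by move: (leTot a b); rewrite ab ba.
Qed.
Lemma vle_add_l x y : vle x (add x y).
Proof. by case/and3P: (add_spec x y). Qed.
Lemma vle_add_r y x : vle y (add x y).
Proof. by case/and3P: (add_spec x y). Qed.
Lemma vle_add_lub x y z : vle x z -> vle y z -> vle (add x y) z.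
Proof.
by case/and3P: (add_spec x y) => _ _ /orP [h|h] hx hy; apply: vle_trans h _.
Qed.
Lemma nu_add x y : nu (add x y) = nu x \/ nu (add x y) = nu y.
Proof.
case/and3P: (add_spec x y) => h1 h2 /orP [h|h]; [left|right]; exact: vle_nu.
Qed.

Lemma vle_mul x x' y y' : vle x x' -> vle y y' -> vle (mul x y) (mul x' y').
Proof.
by case: x => [a|a|]; case: x' => [b|b|]; case: y => [c|c|]; case: y' => [d|d|] //=;
  apply: le_add2.
Qed.
Lemma vle_mull x y y' : vle y y' -> vle (mul x y) (mul x y').
Proof. exact/vle_mul/vle_refl. Qed.
Lemma vle_mulr x x' y : vle x x' -> vle (mul x y) (mul x' y).
Proof. by move=> h; apply: vle_mul h (vle_refl y). Qed.

Lemma big_vle_ub (I : Type) (r : seq I) (P : pred I) (F : I -> R) c :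
  (forall i, P i -> vle (F i) c) -> vle (\big[add/zero]_(i <- r | P i) F i) c.
Proof. by move=> H; apply: (big_ind (fun x => vle x c)) => // x y; apply: vle_add_lub. Qed.

Lemma vle_big (I : eqType) (r : seq I) (P : pred I) (F : I -> R) i :
  i \in r -> P i -> vle (F i) (\big[add/zero]_(j <- r | P j) F j).
Proof.
elim: r => // a r IH; rewrite inE big_cons => /orP [/eqP -> | ir] Pi.
  by rewrite Pi; apply: vle_add_l.
case: (P a); last exact: IH.
by apply: vle_trans (vle_add_r _ _); apply: IH.
Qed.

Lemma vle_bigT (I : finType) (F : I -> R) i : vle (F i) (\big[add/zero]_j F j).
Proof. exact: (@vle_big _ _ xpredT _ _ (mem_index_enum i)). Qed.

Lemma vle_mul_big_ub x (I : Type) (r : seq I) (P : pred I) (F : I -> R) c :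
  (forall i, P i -> vle (mul x (F i)) c) ->
  vle (mul x (\big[add/zero]_(i <- r | P i) F i)) c.
Proof.
move=> H; apply: (big_ind (fun y => vle (mul x y) c)) => //.
  by rewrite stmulx0.
move=> y z hy hz; case: (nu_add y z) => e.
  by rewrite -vle_nu_l nu_mul e -nu_mul vle_nu_l.
by rewrite -vle_nu_l nu_mul e -nu_mul vle_nu_l.
Qed.

Lemma one_le_prod (I : Type) (r : seq I) (P : pred I) (F : I -> R) :
  (forall i, P i -> vle one (F i)) -> vle one (\big[mul/one]_(i <- r | P i) F i).
Proof.
move=> H; apply: (big_ind (fun x => vle one x)) => //; first exact: vle_refl.
by move=> x y hx hy; rewrite -(stmul1m one); apply: vle_mul.
Qed.

Lemma prod_le_one (I : Type) (r : seq I) (P : pred I) (F : I -> R) :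
  (forall i, P i -> vle (F i) one) -> vle (\big[mul/one]_(i <- r | P i) F i) one.
Proof.
move=> H; apply: (big_ind (fun x => vle x one)) => //; first exact: vle_refl.
by move=> x y hx hy; rewrite -(stmul1m one); apply: vle_mul.
Qed.

Lemma prod_ifD1 n (k : 'I_n) a (F : 'I_n -> R) :
  \big[mul/one]_(l < n) (if l == k then a else F l) =
  mul a (\big[mul/one]_(l < n | l != k) F l).
Proof.
rewrite (bigD1 k) //= eqxx; congr (mul _ _).
by apply: eq_bigr => l /negbTE ->.
Qed.

Lemma prod_split_le n (C : {set 'I_n}) (f g : 'I_n -> R) :
  vle (\big[mul/one]_(l in C) f l) one -> \big[mul/one]_(l in C) g l = one ->
  (forall l, l \notin C -> f l = g l) ->
  vle (\big[mul/one]_(l < n) f l) (\big[mul/one]_(l < n) g l).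
Proof.
move=> hf hg he.
rewrite [X in vle X _](bigID (mem C)) [X in vle _ X](bigID (mem C)) /= hg stmul1m.
have -> : \big[mul/one]_(l < n | l \notin C) f l = \big[mul/one]_(l < n | l \notin C) g l.
  by apply: eq_bigr => l hl; apply: he.
by rewrite -{2}[\big[mul/one]_(i < n | _) g i]stmul1m; apply: vle_mulr.
Qed.

(* Tracks.  [pw M s] is the weight of the track of the permutation s, and
   [aw M j s] the weight of that track with row j left out. *)
Definition pw n (M : 'M[R]_n) (s : 'S_n) := \big[mul/one]_(i < n) M i (s i).
Definition aw n (M : 'M[R]_n) (j : 'I_n) (s : 'S_n) :=
  \big[mul/one]_(i < n | i != j) M i (s i).

Lemma pw_split n (M : 'M[R]_n) (s : 'S_n) j : pw M s = mul (M j (s j)) (aw M j s).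
Proof. by rewrite /pw (bigD1 j). Qed.

Lemma det_ub n (M : 'M[R]_n) x c :
  (forall s, vle (mul x (pw M s)) c) -> vle (mul x (stdet le M)) c.
Proof. by move=> H; apply: vle_mul_big_ub => s _; apply: H. Qed.
Lemma det_lb n (M : 'M[R]_n) s : vle (pw M s) (stdet le M).
Proof. exact: vle_bigT. Qed.

Lemma skip_lift n (j : 'I_n) k : skip_ord j k = lift j k.
Proof.
apply: val_inj; rewrite /skip_ord val_insubd /=.
by case: ifP => // h; move: (ltn_ord (lift j k)); rewrite /= h.
Qed.

Lemma minor_prod n (M : 'M[R]_n.+1) (i j : 'I_n.+1) (t : 'S_n) :
  \big[mul/one]_(k < n) (stminor M j i) k (t k) = aw M j (lift_perm j i t).
Proof.
rewrite /aw; under eq_bigr do rewrite mxE !skip_lift.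
case: (pickP 'I_n) => [k0 _ | n0]; last first.
  by rewrite !big1 // => [j1 /unlift_some[i1] | i1 _]; have:= n0 i1.
symmetry; rewrite (reindex (lift j)).
  apply: eq_big => [k | k _] /=; first by rewrite eq_sym neq_lift.
  by rewrite lift_perm_lift.
exists (fun k => odflt k0 (unlift j k)) => k; first by rewrite liftK.
by rewrite inE eq_sym; case/unlift_some=> k1 -> ->.
Qed.

Lemma perm_lift_ex n (s : 'S_n.+1) (i j : 'I_n.+1) :
  s j = i -> exists t : 'S_n, s = lift_perm j i t.
Proof.
move=> sji.
pose ulsf i' (s' : 'S_n.+1) k := odflt k (unlift (s' i') (s' (lift i' k))).
have ulsfK i' (s' : 'S_n.+1) k: lift (s' i') (ulsf i' s' k) = s' (lift i' k).
  rewrite /ulsf; have:= neq_lift i' k.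
  by rewrite -(can_eq (permK s')) => /unlift_some[] ? ? ->.
have inj_ulsf: injective (ulsf j s).
  apply: can_inj (ulsf (s j) s^-1%g) _ => k'.
  by rewrite {1}/ulsf ulsfK !permK liftK.
exists (perm inj_ulsf); apply/permP=> k; case: (unliftP j k) => [k'|] ->.
  by rewrite lift_perm_lift -sji permE ulsfK.
by rewrite lift_perm_id.
Qed.

Lemma adj_ub n (M : 'M[R]_n) i j x c :
  (forall s : 'S_n, s j = i -> vle (mul x (aw M j s)) c) ->
  vle (mul x (stadj le M i j)) c.
Proof.
case: n M i j => [|n] M i j; first by case: i.
move=> H; rewrite mxE /stdet; apply: vle_mul_big_ub => t _.
by rewrite minor_prod; apply: H; rewrite lift_perm_id.
Qed.

Lemma adj_lb n (M : 'M[R]_n) i j (s : 'S_n) : s j = i -> vle (aw M j s) (stadj le M i j).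
Proof.
case: n M i j s => [|n] M i j s sji; first by clear sji; case: i.
have [t ->] := perm_lift_ex sji.
rewrite mxE /stdet -minor_prod; exact: (@vle_bigT _ (fun t : 'S_n => _)).
Qed.

(* Two lower bounds for the adjoint of a matrix with diagonal >= 1_R, from
   the identity track and from a transposition. *)
Lemma adj_diag_lb n (N : 'M[R]_n) i :
  (forall a, vle one (N a a)) -> vle one (stadj le N i i).
Proof.
move=> hd; apply: vle_trans (adj_lb N (perm1 i)).
by apply: one_le_prod => l _; rewrite perm1.
Qed.

Lemma adj_offdiag_lb n (N : 'M[R]_n) i j :
  (forall a, vle one (N a a)) -> i != j -> vle (N i j) (stadj le N i j).
Proof.
move=> hd ij; apply: vle_trans (adj_lb N (tpermR i j)).
rewrite /aw (bigD1 i) //= tpermL -{1}[N i j]stmulx1; apply: vle_mull.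
by apply: one_le_prod => l /andP [lj li]; rewrite tpermD 1?eq_sym.
Qed.

(* If P * B = B * P = I, every row i of P meets a column
   [partner i] where both P i (partner i) and B (partner i) i are finite; the
   remaining entries of that row of P and column of B must vanish, so that P
   is a generalized permutation matrix. *)
Definition is_neginf (x : R) := if x is NegInf then true else false.

Lemma vle_neginf (x : R) : vle x (NegInf G) -> x = NegInf G. Proof. by case: x. Qed.

Lemma big_neginf (I : finType) (F : I -> R) :
  \big[add/zero]_i F i = NegInf G -> forall i, F i = NegInf G.
Proof. by move=> h i; apply: vle_neginf; rewrite -h; apply: vle_bigT. Qed.

Lemma big_all_neginf (I : finType) (F : I -> R) :
  (forall i, F i = NegInf G) -> \big[add/zero]_i F i = NegInf G.
Proof. by move=> h; apply: (big_ind (fun x => x = NegInf G)) => // x y -> ->. Qed.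

Lemma mul_neginf (x y : R) : mul x y = NegInf G -> is_neginf x || is_neginf y.
Proof. by case: x; case: y. Qed.

Lemma mul_one_tang (x y : R) : mul x y = one -> exists a, y = Tang a.
Proof. by case: x => [a|a|]; case: y => [b|b|] //= _; exists b. Qed.

Lemma big_single_seq (I : eqType) (r : seq I) (F : I -> R) i0 :
  uniq r -> (forall i, i != i0 -> F i = NegInf G) ->
  \big[add/zero]_(i <- r) F i = if i0 \in r then F i0 else NegInf G.
Proof.
move=> ur hF; elim: r ur => [|a r IH]; first by rewrite big_nil.
move=> /= /andP [ar ur]; rewrite big_cons inE IH //.
case: (eqVneq a i0) => [ea|ai]; last by rewrite hF.
by move: ar; rewrite ea => /negbTE ->; case: (F i0).
Qed.

Lemma big_single (I : finType) (F : I -> R) i0 :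
  (forall i, i != i0 -> F i = NegInf G) -> \big[add/zero]_i F i = F i0.
Proof.
by move=> h; rewrite (@big_single_seq _ _ _ i0) ?index_enum_uniq ?mem_index_enum.
Qed.

Definition gen_perm n (P : 'M[R]_n) (pi : 'S_n) (c : 'I_n -> G) : Prop :=
  forall i j, P i j = if j == pi i then Tang (c i) else NegInf G.

Section InverseOfInvertible.
Variables (n : nat) (P B : 'M[R]_n).
Hypothesis PB : stmx_mul le P B = stmx1 G n.
Hypothesis BP : stmx_mul le B P = stmx1 G n.

Lemma PB_entry i j :
  \big[add/zero]_(k < n) mul (P i k) (B k j) = if i == j then one else zero.
Proof. by have := congr1 (fun X : 'M[R]_n => X i j) PB; rewrite !mxE. Qed.

Lemma BP_entry i j :
  \big[add/zero]_(k < n) mul (B i k) (P k j) = if i == j then one else zero.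
Proof. by have := congr1 (fun X : 'M[R]_n => X i j) BP; rewrite !mxE. Qed.

Definition partner i := odflt i [pick k | ~~ is_neginf (P i k) && ~~ is_neginf (B k i)].

Lemma partnerP i : ~~ is_neginf (P i (partner i)) && ~~ is_neginf (B (partner i) i).
Proof.
rewrite /partner; case: pickP => [k hk //| h0].
suff: \big[add/zero]_(k < n) mul (P i k) (B k i) = NegInf G by rewrite PB_entry eqxx.
apply: big_all_neginf => k; move/negbT: (h0 k); rewrite negb_and !negbK.
by case: (P i k); case: (B k i).
Qed.

Lemma B_row_partner i j : j != i -> B (partner i) j = NegInf G.
Proof.
move=> ji; have := PB_entry i j; rewrite eq_sym (negbTE ji).
move=> /big_neginf /(_ (partner i)) /mul_neginf.
by case/andP: (partnerP i) => /negbTE -> _ /=; case: (B (partner i) j).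
Qed.

Lemma partner_inj : injective partner.
Proof.
move=> i i' e; apply/eqP; apply/negPn/negP => ii'.
have := B_row_partner (i := i) (j := i'); rewrite eq_sym => /(_ ii'); rewrite e.
by case/andP: (partnerP i') => _; case: (B (partner i') i').
Qed.

Lemma P_off_partner i j : j != partner i -> P i j = NegInf G.
Proof.
move=> jf; have := BP_entry (partner i) j; rewrite eq_sym (negbTE jf).
move=> /big_neginf /(_ i) /mul_neginf.
by case/andP: (partnerP i) => _ /negbTE -> /=; case: (P i j).
Qed.

Lemma P_partner_tang i : exists a, P i (partner i) = Tang a.
Proof.
have := BP_entry (partner i) (partner i); rewrite eqxx (@big_single _ _ i).
  exact: mul_one_tang.
by move=> k ki; rewrite B_row_partner.
Qed.

End InverseOfInvertible.

Lemma invertible_gen_perm n (P : 'M[R]_n) :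
  invertible le P -> exists (pi : 'S_n) (c : 'I_n -> G), gen_perm P pi c.
Proof.
case=> B [PB BP]; exists (perm (partner_inj PB)).
exists (fun i => if P i (partner P B i) is Tang a then a else 0) => i j.
rewrite permE; case: (eqVneq j (partner P B i)) => [->|jf].
  by have [a ->] := P_partner_tang PB BP i.
by apply: (P_off_partner PB BP).
Qed.

Section GenPermProducts.
Variables (n : nat) (P : 'M[R]_n) (pi : 'S_n) (c : 'I_n -> G).
Hypothesis hP : gen_perm P pi c.

Lemma gen_perm_mull (X : 'M[R]_n) i j :
  nu (stmx_mul le P X i j) = nu (mul (Tang (c i)) (X (pi i) j)).
Proof.
rewrite mxE; apply: vle_nu.
  by apply: big_vle_ub => k _; rewrite hP; case: eqP => [->|_] //; exact: vle_refl.
apply: vle_trans (vle_bigT _ (pi i)).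
by rewrite hP eqxx; apply: vle_refl.
Qed.

Lemma gen_perm_mulr (X : 'M[R]_n) i j :
  nu (stmx_mul le X P i j) = nu (mul (X i (pi^-1 j)%g) (Tang (c (pi^-1 j)%g))).
Proof.
rewrite mxE; apply: vle_nu.
  apply: big_vle_ub => k _; rewrite hP; case: eqP => [->|_]; last by rewrite stmulx0.
  by rewrite permK; apply: vle_refl.
apply: vle_trans (vle_bigT _ (pi^-1 j)%g).
by rewrite hP permKV eqxx; apply: vle_refl.
Qed.

End GenPermProducts.

(* Suppose that, up to ghosts, A is obtained from M by moving row
   pi i and column rho j of M to position (i, j), and multiplying row i by
   Tang (c i) and column j by Tang (d j).  Then the tracks, determinant,
   adjoint and quasi-inverse of A are those of M, moved and rescaled in the
   same way. *)
Section Rescale.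
Variables (n : nat) (M A : 'M[R]_n) (c d : 'I_n -> G) (pi rho : 'S_n).
Hypothesis hA : forall i j, nu (A i j) = nu (mul (Tang (c i + d j)) (M (pi i) (rho j))).

Lemma aw_rescale (s : 'S_n) j :
  nu (aw A j s) = nu (mul (Tang (\sum_(l < n | l != j) c l + \sum_(m < n | m != s j) d m))
                          (aw M (pi j) (pi^-1 * s * rho)%g)).
Proof.
rewrite /aw (@nu_prod_congr _ _ _ _
  (fun l => mul (Tang (c l + d (s l))) (M (pi l) (rho (s l))))); last by move=> l _.
congr nu; rewrite big_split; congr (mul _ _).
  have -> : \sum_(m < n | m != s j) d m = \sum_(l < n | l != j) d (s l).
    rewrite (reindex_inj (@perm_inj _ s)) /=; apply: eq_bigl => l.
    by rewrite (inj_eq perm_inj).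
  by rewrite -big_split /= prod_tang.
rewrite [RHS](reindex_inj (@perm_inj _ pi)) /=; apply: eq_big => l.
  by rewrite (inj_eq perm_inj).
by move=> _; rewrite !permM permK.
Qed.

Lemma pw_rescale (s : 'S_n) :
  nu (pw A s) = nu (mul (Tang (\sum_(l < n) c l + \sum_(m < n) d m))
                        (pw M (pi^-1 * s * rho)%g)).
Proof.
rewrite /pw (@nu_prod_congr _ _ _ _
  (fun l => mul (Tang (c l + d (s l))) (M (pi l) (rho (s l))))); last by move=> l _.
congr nu; rewrite big_split; congr (mul _ _).
  rewrite [\sum_(m < n) d m](reindex_inj (@perm_inj _ s)).
  by rewrite -big_split /= prod_tang.
rewrite [RHS](reindex_inj (@perm_inj _ pi)) /=; apply: eq_bigr => l _.
by rewrite !permM permK.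
Qed.

(* The correspondence between tracks of A and of M is a bijection. *)
Lemma perm_conjK (t : 'S_n) : (pi^-1 * (pi * t * rho^-1) * rho)%g = t.
Proof. by rewrite !mulgA mulVg mul1g -mulgA mulVg mulg1. Qed.

Lemma adj_rescale i j :
  nu (stadj le A i j) =
  nu (mul (Tang (\sum_(l < n | l != j) c l + \sum_(m < n | m != i) d m))
          (stadj le M (rho i) (pi j))).
Proof.
apply: vle_nu.
  rewrite -(stmul1m (stadj le A i j)); apply: adj_ub => s sj; rewrite stmul1m.
  rewrite (vle_nu_eq _ (aw_rescale s j)) sj; apply: vle_mull.
  by apply: adj_lb; rewrite !permM permK sj.
apply: adj_ub => t ht.
pose s := (pi * t * rho^-1)%g.
have sj : s j = i by rewrite /s !permM ht permK.
apply: vle_trans (adj_lb A sj).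
by rewrite (vle_nu_eqr _ (aw_rescale s j)) perm_conjK sj; apply: vle_refl.
Qed.

Lemma det_rescale :
  nu (stdet le A) = nu (mul (Tang (\sum_(l < n) c l + \sum_(m < n) d m)) (stdet le M)).
Proof.
apply: vle_nu.
  rewrite -(stmul1m (stdet le A)); apply: det_ub => s; rewrite stmul1m.
  by rewrite (vle_nu_eq _ (pw_rescale s)); apply/vle_mull/det_lb.
apply: det_ub => t; pose s := (pi * t * rho^-1)%g.
apply: vle_trans (det_lb A s).
by rewrite (vle_nu_eqr _ (pw_rescale s)) perm_conjK; apply: vle_refl.
Qed.

Lemma nabla_rescale i j :
  nu (stnabla le A i j) = nu (mul (Tang (- c j - d i)) (stnabla le M (rho i) (pi j))).
Proof.
rewrite !stnablaE nu_mul nu_stinv det_rescale adj_rescale -nu_stinv -nu_mul.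
congr nu; rewrite stinv_mul stmulACA; congr (mul _ _).
rewrite /= (bigD1 j) //= (bigD1 i (P := predT)) //=; congr Tang.
by rewrite !GRing.opprD GRing.addrACA !GRing.addrNK.
Qed.

End Rescale.

Lemma restrict_perm n (s : 'S_n) (C : {set 'I_n}) :
  (forall l, (s l \in C) = (l \in C)) ->
  exists r : 'S_n, forall l, r l = if l \in C then s l else l.
Proof.
move=> hC.
have inj : injective (fun l => if l \in C then s l else l).
  move=> x y /=; case xC: (x \in C); case yC: (y \in C) => //.
  - exact: perm_inj.
  - by move=> e; move: yC; rewrite -e hC xC.
  - by move=> e; move: xC; rewrite e hC yC.
by exists (perm inj) => l; rewrite permE.
Qed.

Lemma porbit_step n (s : 'S_n) l : porbit s (s l) = porbit s l.
Proof. by rewrite -[s l]/((s ^+ 1)%g l) porbit_perm. Qed.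

Lemma mem_porbit_step n (s : 'S_n) j l : (s l \in porbit s j) = (l \in porbit s j).
Proof. by rewrite porbit_sym porbit_step porbit_sym. Qed.

Lemma tperm_split n (s : 'S_n) x y :
  x != y -> x \in porbit s y -> x \notin porbit (tperm x y * s)%g y.
Proof.
move=> xy xs.
have h1 := porbits_mul_tperm s x y.
have h2 := porbits_mul_tperm (tperm x y * s)%g x y.
cbv zeta in h1, h2; rewrite mulgA tperm2 mul1g in h2.
rewrite xs xy /= in h1; rewrite xy /= in h2.
move: h1 h2; case: (x \notin _) => //=; lia.
Qed.

Definition moved n (s : 'S_n) := #|[set l | s l != l]|.

(* Assume that E absorbs N on the right
   (E a b * N b c <= E a c), that N <= E, that the diagonal of E is <= 1_R and
   that of N is >= 1_R.  Then every track of N has weight <= 1_R, and more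
   precisely redirecting a column of E along a track of N can only decrease
   E.  The proof is an induction on the number of moved points: removing j
   from the cycle of s through j gives a permutation moving fewer points. *)
Section TrackBound.
Variables (n : nat) (E N : 'M[R]_n).
Hypothesis EN : forall a b c, vle (mul (E a b) (N b c)) (E a c).
Hypothesis NE : forall a b, vle (N a b) (E a b).
Hypothesis Ed : forall a, vle (E a a) one.
Hypothesis Nd : forall a, vle one (N a a).

Definition bounded_track (t : 'S_n) :=
  vle (pw N t) one /\ forall i j, vle (mul (E i (t j)) (aw N j t)) (E i j).

Lemma bounded_track_moved (s : 'S_n) :
  (forall t : 'S_n, (moved t < moved s)%N -> bounded_track t) ->
  forall i j, s j != j -> vle (mul (E i (s j)) (aw N j s)) (E i j).
Proof.
move=> IH i j sjj.
pose q := (s^-1)%g j.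
have sq : s q = j by rewrite /q permKV.
have qj : q != j by apply: contraNneq sjj => e; rewrite -{1}e sq eqxx.
pose t := (tperm q j * s)%g.
have tq : t q = s j by rewrite permM tpermL.
have tj : t j = j by rewrite permM tpermR sq.
have lt_moved : (moved t < moved s)%N.
  rewrite /moved (cardsD1 j [set l | s l != l]) inE sjj add1n ltnS.
  apply: subset_leq_card; apply/subsetP => l; rewrite !inE => tl.
  have lj : l != j by apply: contraNneq tl => ->; rewrite tj eqxx.
  rewrite lj /=; case: (eqVneq l q) => [->|lq]; first by rewrite sq eq_sym.
  by move: tl; rewrite permM tpermD // eq_sym.
have [_ /(_ i q)] := IH t lt_moved; rewrite tq => hq.
set W := \big[mul/one]_(l < n | (l != j) && (l != q)) N l (s l).
have -> : aw N j s = mul (N q j) W by rewrite /aw (bigD1 q) //= sq.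
have awt : aw N q t = mul (N j j) W.
  rewrite /aw (bigD1 j) 1?eq_sym //= tj; congr (mul _ _).
  apply: eq_big => l; first by rewrite andbC.
  by move=> /andP [lq lj]; rewrite permM tpermD // eq_sym.
have EW : vle (mul (E i (s j)) W) (E i q).
  apply: vle_trans hq; rewrite awt; apply: vle_mull.
  by rewrite -{1}(stmul1m W); apply: vle_mulr.
apply: vle_trans (EN i q j).
by rewrite [mul (N q j) W]stmulC stmulA; apply: vle_mulr.
Qed.

Lemma bounded_track_step (s : 'S_n) :
  (forall t : 'S_n, (moved t < moved s)%N -> bounded_track t) -> bounded_track s.
Proof.
move=> IH; have Hmoved := bounded_track_moved IH.
have Hpw : vle (pw N s) one.
  case: (pickP [pred l | s l != l]) => [l0 /= hl0 | h0].
    rewrite (pw_split _ _ l0); apply: vle_trans (Ed l0); apply: vle_trans (Hmoved l0 l0 hl0).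
    exact/vle_mulr/NE.
  rewrite /pw; apply: prod_le_one => l _.
  have -> : s l = l by move: (h0 l) => /= /negbFE /eqP.
  exact: vle_trans (NE l l) (Ed l).
split => // i j; case: (eqVneq (s j) j) => [sj|sj]; last exact: Hmoved.
rewrite sj -[X in vle _ X]stmulx1; apply: vle_mull.
apply: vle_trans Hpw; rewrite (pw_split _ _ j) sj -{1}(stmul1m (aw N j s)).
exact: vle_mulr.
Qed.

Lemma all_tracks_bounded (s : 'S_n) : bounded_track s.
Proof.
elim: {s}(moved s) {-2}s (leqnn (moved s)) => [|m IH] s hs;
  apply: bounded_track_step => t ht.
  by have := leq_trans ht hs.
by apply: IH; rewrite -ltnS; apply: leq_trans ht hs.
Qed.

End TrackBound.

Section AdjointOfDefinite.
Variables (n : nat) (M : 'M[R]_n).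
Hypothesis M_diag : forall i, M i i = one.
Hypothesis M_tracks : forall s, vle (pw M s) one.

Lemma M_diag_ge a : vle one (M a a). Proof. by rewrite M_diag; apply: vle_refl. Qed.

(* The part of a track lying on a union of cycles has weight <= 1_R: complete
   it by fixed points, which have weight 1_R. *)
Lemma cycles_weight_le (s : 'S_n) (C : {set 'I_n}) :
  (forall l, (s l \in C) = (l \in C)) ->
  vle (\big[mul/one]_(l in C) M l (s l)) one.
Proof.
move=> hC; have [r hr] := restrict_perm hC.
have := M_tracks r; rewrite /pw (bigID (mem C)) /=.
have -> : \big[mul/one]_(l < n | l \notin C) M l (r l) = one.
  by apply: big1 => l /negbTE lC; rewrite hr lC M_diag.
rewrite stmulx1; congr (vle _ _).
by apply: eq_bigr => l lC; rewrite hr lC.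
Qed.

(* For s k = i, the "track" of s redirected at row k to column j is dominated
   by adj(M)_{i,j}.  First case: k is off the cycle of s through j; then the
   cycle through j is replaced by fixed points and k is sent to j. *)
Lemma redirect_le_off_cycle (s : 'S_n) i k j :
  s k = i -> k \notin porbit s j ->
  vle (\big[mul/one]_(l < n) (if l == k then M k j else M l (s l))) (stadj le M i j).
Proof.
move=> ski kC; set C := porbit s j.
have invC l : (s l \in C) = (l \in C) by apply: mem_porbit_step.
have jC : j \in C by apply: porbit_id.
have [r hr] : exists r : 'S_n, forall l, r l = if l \in ~: C then s l else l.
  by apply: restrict_perm => l; rewrite !inE invC.
pose s' := (tperm k j * r)%g.
have s'j : s' j = i by rewrite permM tpermR hr inE kC.
apply: vle_trans (adj_lb M s'j).
rewrite -(stmul1m (aw M j s')) /aw -prod_ifD1.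
apply: (prod_split_le (C := C)).
- rewrite (eq_bigr (fun l => M l (s l))); first exact: cycles_weight_le.
  by move=> l lC; case: eqP => // e; move: kC; rewrite -e lC.
- apply: big1 => l lC; case: eqP => // /eqP lj.
  have lk : k != l by apply: contraNneq kC => ->.
  by rewrite permM tpermD // ?hr ?inE ?lC ?M_diag // eq_sym.
- move=> l lC.
  have lj : l != j by apply: contraNneq lC => ->.
  rewrite (negbTE lj); case: eqP => [->|/eqP lk].
    by rewrite permM tpermL hr inE jC.
  by rewrite permM tpermD ?hr ?inE ?(negbTE lC) // eq_sym.
Qed.

(* Second case: k lies on the cycle of s through j.  Exchanging k with the
   preimage p of j splits that cycle; the piece through j and k is a union of
   cycles of weight <= 1_R, and the rest, with p sent to i, is a track through
   (j, i) with row j left out. *)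
Lemma redirect_le_on_cycle (s : 'S_n) i k j :
  s k = i -> i != j -> k \in porbit s j ->
  vle (\big[mul/one]_(l < n) (if l == k then M k j else M l (s l))) (stadj le M i j).
Proof.
move=> ski ij kC.
pose p := (s^-1)%g j.
have sp : s p = j by rewrite /p permKV.
have pk : k != p by apply: contra_neq ij => e; rewrite -ski e sp.
pose u := (tperm k p * s)%g.
have uk : u k = j by rewrite permM tpermL.
have up : u p = i by rewrite permM tpermR.
have kCp : k \in porbit s p by rewrite -(porbit_step s p) sp.
have hsp := tperm_split pk kCp.
set C := porbit u j.
have CE : C = porbit u k by rewrite /C -uk porbit_step.
have pC : p \notin C by rewrite CE porbit_sym.
have iC : i \notin C by rewrite CE porbit_sym -up porbit_step.
have jC : j \in C by apply: porbit_id.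
have invC l : (u l \in C) = (l \in C) by apply: mem_porbit_step.
have [r hr] : exists r : 'S_n, forall l, r l = if l \in ~: C then u l else l.
  by apply: restrict_perm => l; rewrite !inE invC.
pose s' := (r * tperm i j)%g.
have s'j : s' j = i by rewrite permM hr inE jC /= tpermR.
apply: vle_trans (adj_lb M s'j).
rewrite -(stmul1m (aw M j s')) /aw -prod_ifD1.
apply: (prod_split_le (C := C)).
- rewrite (eq_bigr (fun l => M l (u l))); first exact: cycles_weight_le.
  move=> l lC; case: eqP => [->|/eqP lk]; first by rewrite uk.
  have lp : l != p by apply: contraNneq pC => <-.
  by rewrite permM tpermD // eq_sym.
- apply: big1 => l lC; case: eqP => // /eqP lj.
  have li : l != i by apply: contraNneq iC => <-.
  by rewrite permM hr inE lC /= tpermD ?M_diag // eq_sym.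
- move=> l lC.
  have lk : l != k by apply: contraNneq lC => ->; rewrite CE porbit_id.
  have lj : l != j by apply: contraNneq lC => ->.
  rewrite (negbTE lk) (negbTE lj) permM hr inE lC /=.
  case: (eqVneq l p) => [->|lp]; first by rewrite up tpermL sp.
  have ul : u l = s l by rewrite permM tpermD // eq_sym.
  have sli : s l != i by rewrite -ski (inj_eq perm_inj).
  have slj : s l != j by rewrite -sp (inj_eq perm_inj).
  by rewrite ul tpermD // eq_sym.
Qed.

Lemma adj_mul_entry_le i k j : vle (mul (stadj le M i k) (M k j)) (stadj le M i j).
Proof.
rewrite stmulC; apply: adj_ub => s ski.
case: (eqVneq k j) => [<-|kj]; first by rewrite M_diag stmul1m; apply: adj_lb.
case: (eqVneq i j) => [<-|ij].
  apply: vle_trans (adj_diag_lb i M_diag_ge).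
  by rewrite -ski -pw_split.
rewrite -prod_ifD1; case: (boolP (k \in porbit s j)) => kC.
  exact: redirect_le_on_cycle.
exact: redirect_le_off_cycle.
Qed.

Lemma adj_diag_le a : vle (stadj le M a a) one.
Proof.
rewrite -(stmul1m (stadj le M a a)); apply: adj_ub => s sa; rewrite stmul1m.
by have := M_tracks s; rewrite (pw_split _ _ a) sa M_diag stmul1m.
Qed.

Lemma adj_diag_ge a : vle one (stadj le M a a).
Proof. exact: adj_diag_lb M_diag_ge. Qed.

Lemma entry_le_adj i j : vle (M i j) (stadj le M i j).
Proof.
case: (eqVneq i j) => [<-|ij]; first by rewrite M_diag; apply: adj_diag_ge.
exact: adj_offdiag_lb M_diag_ge ij.
Qed.

Lemma adj_mul_adj_le i k j :
  vle (mul (stadj le M i k) (stadj le M k j)) (stadj le M i j).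
Proof.
apply: adj_ub => s sj.
have [_ /(_ i j)] := all_tracks_bounded adj_mul_entry_le entry_le_adj adj_diag_le
  M_diag_ge s.
by rewrite sj.
Qed.

Lemma adj_tracks_bounded (s : 'S_n) : bounded_track (stadj le M) (stadj le M) s.
Proof.
exact: all_tracks_bounded adj_mul_adj_le (fun a b => vle_refl _) adj_diag_le adj_diag_ge s.
Qed.

Lemma adj_adj_nu i j : nu (stadj le (stadj le M) i j) = nu (stadj le M i j).
Proof.
apply: vle_nu.
  rewrite -(stmul1m (stadj le _ i j)); apply: adj_ub => s sj; rewrite stmul1m.
  have [_ /(_ i j)] := adj_tracks_bounded s; rewrite sj; apply: vle_trans.
  by rewrite -{1}(stmul1m (aw _ j s)); apply/vle_mulr/adj_diag_ge.
case: (eqVneq i j) => [<-|ij].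
  by apply: vle_trans (adj_diag_le i) _; apply: adj_diag_lb adj_diag_ge.
exact: adj_offdiag_lb adj_diag_ge ij.
Qed.

Lemma det_adj_nu : nu (stdet le (stadj le M)) = nu one.
Proof.
apply: vle_nu.
  rewrite -(stmul1m (stdet le _)); apply: det_ub => s; rewrite stmul1m.
  by case: (adj_tracks_bounded s).
apply: vle_trans (det_lb _ 1%g); apply: one_le_prod => l _.
by rewrite perm1; apply: adj_diag_ge.
Qed.

Lemma nabla_adj_nu i j : nu (stnabla le (stadj le M) i j) = nu (stadj le M i j).
Proof.
by rewrite stnablaE nu_mul nu_stinv det_adj_nu -nu_stinv stinv1 -nu_mul stmul1m adj_adj_nu.
Qed.

End AdjointOfDefinite.

Lemma definite_tracks n (M : 'M[R]_n) : definite le M -> forall s, vle (pw M s) one.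
Proof. by case=> _ hdet s; rewrite -hdet; apply: det_lb. Qed.

Lemma nabla_definite n (M : 'M[R]_n) : definite le M -> stnabla le M = stadj le M.
Proof. by case=> _ hdet; apply/matrixP => i j; rewrite stnablaE hdet stinv1 stmul1m. Qed.

Lemma nabla_nabla_definite n (M : 'M[R]_n) :
  definite le M -> nu_equiv (stnabla le (stnabla le M)) (stnabla le M).
Proof.
move=> defM i j; have [Mdiag _] := defM.
by rewrite (nabla_definite defM) (nabla_adj_nu Mdiag (definite_tracks defM)).
Qed.

(* Left definite form A = P * Abar: up to ghosts A is Abar with rows permuted
   by pi and rescaled by c, so A^∇ is adj(Abar) with columns permuted by pi
   and rescaled by c^{-1}. *)
Section LeftDefiniteForm.
Variables (n : nat) (A P Abar : 'M[R]_n) (pi : 'S_n) (c : 'I_n -> G).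
Hypothesis hP : gen_perm P pi c.
Hypothesis defAbar : definite le Abar.
Hypothesis eA : A = stmx_mul le P Abar.

Lemma entry_left i j :
  nu (A i j) = nu (mul (Tang (c i + (fun=> 0) j)) (Abar (pi i) ((1%g : 'S_n) j))).
Proof. by rewrite eA (gen_perm_mull hP) GRing.addr0 perm1. Qed.

Lemma nabla_left i j :
  nu (stnabla le A i j) = nu (mul (Tang (- c j)) (stadj le Abar i (pi j))).
Proof. by rewrite (nabla_rescale entry_left) GRing.subr0 perm1 (nabla_definite defAbar). Qed.

Lemma summand_left i k j :
  nu (mul (stnabla le A i k) (A k j)) = nu (mul (stadj le Abar i (pi k)) (Abar (pi k) j)).
Proof.
rewrite nu_mul nabla_left entry_left -!nu_mul perm1 GRing.addr0; congr nu.
by rewrite stmulACA stmulTT GRing.addNr stmul1m.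
Qed.

Lemma nabla_definite_left : nu_equiv (stnabla le Abar) (stmx_mul le (stnabla le A) A).
Proof.
have [Abar_diag _] := defAbar.
move=> i j; rewrite (nabla_definite defAbar) [in RHS]mxE; apply: vle_nu.
  apply: vle_trans (vle_bigT _ (pi^-1 j)%g).
  rewrite (vle_nu_eqr _ (summand_left _ _ _)) permKV Abar_diag stmulx1.
  exact: vle_refl.
apply: big_vle_ub => k _; rewrite (vle_nu_eq _ (summand_left _ _ _)).
exact: adj_mul_entry_le Abar_diag (definite_tracks defAbar) _ _ _.
Qed.

(* Part (b): applying the rescaling once more to A^∇ gives
   A^∇∇ ≅_ν P * A^∇ * P. *)
Lemma nabla_nabla_left :
  nu_equiv (stnabla le (stnabla le A)) (stmx_mul le P (stmx_mul le (stnabla le A) P)).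
Proof.
have [Abar_diag _] := defAbar.
have nablaA i j : nu (stnabla le A i j) =
    nu (mul (Tang ((fun=> 0) i + (fun j => - c j) j))
            (stadj le Abar ((1%g : 'S_n) i) (pi j))).
  by rewrite GRing.add0r perm1; apply: nabla_left.
move=> i j; rewrite (nabla_rescale nablaA) nu_mul.
rewrite (nabla_adj_nu Abar_diag (definite_tracks defAbar)) -nu_mul perm1.
rewrite GRing.oppr0 GRing.sub0r GRing.opprK.
rewrite [RHS](gen_perm_mull hP) [RHS]nu_mul [in RHS](gen_perm_mulr hP) [in RHS]nu_mul.
rewrite [in RHS]nabla_left -!nu_mul permKV.
congr nu; congr (mul _ _).
by rewrite stmulC stmulA stmulTT GRing.addrN stmul1m.
Qed.

End LeftDefiniteForm.

(* Right definite form A = Atil * Q: up to ghosts A is Atil with columns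
   permuted by rho^{-1} and rescaled by e. *)
Section RightDefiniteForm.
Variables (n : nat) (A Q Atil : 'M[R]_n) (rho : 'S_n) (e : 'I_n -> G).
Hypothesis hQ : gen_perm Q rho e.
Hypothesis defAtil : definite le Atil.
Hypothesis eA : A = stmx_mul le Atil Q.

Lemma entry_right i j :
  nu (A i j) = nu (mul (Tang ((fun=> 0) i + e (rho^-1 j)%g)) (Atil ((1%g : 'S_n) i) (rho^-1 j)%g)).
Proof. by rewrite eA (gen_perm_mulr hQ) GRing.add0r perm1 stmulC. Qed.

Lemma nabla_right i j :
  nu (stnabla le A i j) = nu (mul (Tang (- e (rho^-1 i)%g)) (stadj le Atil (rho^-1 i)%g j)).
Proof.
by rewrite (nabla_rescale entry_right) GRing.oppr0 GRing.sub0r perm1 (nabla_definite defAtil).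
Qed.

Lemma summand_right i k j :
  nu (mul (A i k) (stnabla le A k j)) =
  nu (mul (Atil i (rho^-1 k)%g) (stadj le Atil (rho^-1 k)%g j)).
Proof.
rewrite nu_mul nabla_right entry_right -!nu_mul perm1 GRing.add0r; congr nu.
by rewrite stmulACA stmulTT GRing.addrN stmul1m.
Qed.

Lemma nabla_definite_right : nu_equiv (stnabla le Atil) (stmx_mul le A (stnabla le A)).
Proof.
have [Atil_diag _] := defAtil; have Atil_tracks := definite_tracks defAtil.
move=> i j; rewrite (nabla_definite defAtil) [in RHS]mxE; apply: vle_nu.
  apply: vle_trans (vle_bigT _ (rho i)).
  rewrite (vle_nu_eqr _ (summand_right _ _ _)) permK Atil_diag stmul1m.
  exact: vle_refl.
apply: big_vle_ub => k _; rewrite (vle_nu_eq _ (summand_right _ _ _)).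
apply: vle_trans (adj_mul_adj_le Atil_diag Atil_tracks i (rho^-1 k)%g j).
exact/vle_mulr/entry_le_adj.
Qed.

End RightDefiniteForm.

End Supertropical.

Theorem corollary3p4 (G : zmodType) (le : rel G) (HG : is_oag le) (n : nat)
  (A P Q Abar Atil : 'M[stelt G]_n) :
  nonsingular le A ->
  invertible le P -> definite le Abar -> A = stmx_mul le P Abar ->
  invertible le Q -> definite le Atil -> A = stmx_mul le Atil Q ->
  ((nu_equiv (stnabla le (stnabla le Abar)) (stnabla le Abar) /\
    nu_equiv (stnabla le Abar) (stmx_mul le (stnabla le A) A)) /\
   (nu_equiv (stnabla le (stnabla le Atil)) (stnabla le Atil) /\
    nu_equiv (stnabla le Atil) (stmx_mul le A (stnabla le A)))) /\
  nu_equiv (stnabla le (stnabla le A))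
    (stmx_mul le P (stmx_mul le (stnabla le A) P)).
Proof.
move=> _ invP defAbar eA invQ defAtil eA'.
have [pi [c hP]] := invertible_gen_perm HG invP.
have [rho [e hQ]] := invertible_gen_perm HG invQ.
split; [split; split|].
- exact: (nabla_nabla_definite HG defAbar).
- exact: (nabla_definite_left HG hP defAbar eA).
- exact: (nabla_nabla_definite HG defAtil).
- exact: (nabla_definite_right HG hQ defAtil eA').
- exact: (nabla_nabla_left HG hP defAbar eA).
Qed.
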